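(* Let $P\subset\mathbb{R}^N$ be a polytope with vertex set $\{v_1,\dots,v_M\}$, and let $v:\mathbb{R}^N\to\{v_1,\dots,v_M\}$ assign to each $x$ a vertex of $P$ closest to $x$ in Euclidean norm (with some fixed tie-breaking rule). For a vertex $v_i$ let $C_1(v_i)$ denote the set of unit outward normals of supporting hyperplanes of $P$ at $v_i$, i.e. $C_1(v_i)=\{u\in\mathbb{R}^N:\|u\|=1,\ u\cdot(p-v_i)\le 0\ \text{for all } p\in P\}$. Then for each $\varepsilon>0$ there exists $D>0$ such that whenever $\|x\|>D$, $$d\Big(\frac{x}{\|x\|},\,C_1(v(x))\Big)<\varepsilon.$$
   Context: $d$ denotes Euclidean distance between a point and a set. *)

From HB Require Import structures.
From mathcomp Require Import all_boot all_order all_algebra.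
From mathcomp Require Import boolp classical_sets reals.
Set Implicit Arguments. Unset Strict Implicit. Unset Printing Implicit Defensive.
Import Order.TTheory GRing.Theory Num.Theory.
Local Open Scope ring_scope.
Local Open Scope classical_set_scope.

Definition dotv {R : realType} {N : nat} (u w : 'rV[R]_N) : R :=
  \sum_(i < N) u 0 i * w 0 i.
Definition enorm {R : realType} {N : nat} (x : 'rV[R]_N) : R :=
  Num.sqrt (dotv x x).

Definition edist {R : realType} {N : nat} (y : 'rV[R]_N) (C : set 'rV[R]_N) : R :=
  inf [set enorm (y - c) | c in C].

Definition convhull {R : realType} {N M : nat} (vs : 'I_M -> 'rV[R]_N) : set 'rV[R]_N :=
  [set p | exists l : 'I_M -> R, (forall i, 0 <= l i) /\ \sum_(i < M) l i = 1 /\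
                                 p = \sum_(i < M) l i *: vs i].

Definition is_vertex {R : realType} {N : nat} (P : set 'rV[R]_N) (p : 'rV[R]_N) : Prop :=
  P p /\ forall a b t, P a -> P b -> 0 < t < 1 ->
    p = (1 - t) *: a + t *: b -> a = p /\ b = p.

Definition C1 {R : realType} {N : nat} (P : set 'rV[R]_N) (w : 'rV[R]_N) : set 'rV[R]_N :=
  [set u | enorm u = 1 /\ forall p, P p -> dotv u (p - w) <= 0].

From Pilot Require Import Defs.
From HB Require Import structures.
From mathcomp Require Import all_boot all_order all_algebra.
From mathcomp Require Import boolp classical_sets reals.
From mathcomp Require Import topology normedtype derive realfun.
From mathcomp Require Import ring lra.
Import Order.TTheory GRing.Theory Num.Theory.
Import numFieldTopology.Exports numFieldNormedType.Exports.
Local Open Scope ring_scope.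
Local Open Scope classical_set_scope.

(* Import [Defs] last so that [edist] is [Defs.edist] and not the extended
   distance of [normedtype]. *)
Import Defs.

(** If [v_i] is a vertex nearest to [x], expanding
    [|x - v_i|^2 <= |x - v_j|^2] gives [2 x.(v_j - v_i) <= |v_j|^2 - |v_i|^2],
    so the direction [y = x/|x|] satisfies [y.(v_j - v_i) <= O(1/|x|)] for
    every [j].  A compactness argument on the unit sphere shows that unit
    vectors satisfying the finitely many constraints [u.(v_j - v_i) <= 0] up
    to a small enough error are uniformly close to unit vectors satisfying
    them exactly, and those are outward normals of the hull at [v_i]. *)

Section Euclidean.
Context {R : realType} {N : nat}.
Implicit Types (x y z w : 'rV[R]_N).

Lemma dotvC x y : dotv x y = dotv y x.
Proof. by apply: eq_bigr => i _; rewrite mulrC. Qed.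

Lemma dotvBl x y z : dotv (x - y) z = dotv x z - dotv y z.
Proof. by rewrite /dotv -sumrB; apply: eq_bigr => i _; rewrite !mxE mulrBl. Qed.

Lemma dotvBr x y z : dotv z (x - y) = dotv z x - dotv z y.
Proof. by rewrite dotvC dotvBl !(dotvC z). Qed.

Lemma dotvZl a x z : dotv (a *: x) z = a * dotv x z.
Proof.
by rewrite /dotv mulr_sumr; apply: eq_bigr => i _; rewrite mxE mulrA.
Qed.

Lemma dotvZr a x z : dotv z (a *: x) = a * dotv z x.
Proof. by rewrite dotvC dotvZl dotvC. Qed.

Lemma dotv_sumr (I : finType) (F : I -> 'rV[R]_N) z :
  dotv z (\sum_j F j) = \sum_j dotv z (F j).
Proof.
by rewrite /dotv exchange_big; apply: eq_bigr => i _; rewrite summxE mulr_sumr.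
Qed.

Lemma dotv_ge0 x : 0 <= dotv x x.
Proof. by apply: sumr_ge0 => i _; rewrite -expr2 sqr_ge0. Qed.

Lemma enorm_ge0 x : 0 <= enorm x.
Proof. exact: sqrtr_ge0. Qed.

Lemma sqr_enorm x : enorm x ^+ 2 = dotv x x.
Proof. by rewrite sqr_sqrtr // dotv_ge0. Qed.

Lemma enorm0 : enorm (0 : 'rV[R]_N) = 0.
Proof. by rewrite /enorm /dotv big1 ?sqrtr0 // => i _; rewrite mxE mul0r. Qed.

Lemma enormZ a x : enorm (a *: x) = `|a| * enorm x.
Proof.
by rewrite /enorm dotvZl dotvZr mulrA -expr2 sqrtrM ?sqr_ge0 // sqrtr_sqr.
Qed.

Lemma enorm_normalize x : enorm x != 0 -> enorm ((enorm x)^-1 *: x) = 1.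
Proof. by move=> x0; rewrite enormZ ger0_norm ?invr_ge0 ?enorm_ge0 ?mulVf. Qed.

Lemma coord_le_enorm x i : `|x 0 i| <= enorm x.
Proof.
rewrite -(sqrtr_sqr (x 0 i)) ler_sqrt ?dotv_ge0 // /dotv (bigD1 i) //= expr2.
by rewrite lerDl; apply: sumr_ge0 => j _; rewrite -expr2 sqr_ge0.
Qed.

Lemma edist_le {C : set 'rV[R]_N} {y c : 'rV[R]_N} :
  C c -> edist y C <= enorm (y - c).
Proof.
move=> Cc; apply: ge_inf; last by exists c.
by exists 0 => _ [d _ <-]; exact: enorm_ge0.
Qed.

Lemma nearest_dotv_le {x w z : 'rV[R]_N} : enorm (x - w) <= enorm (x - z) ->
  2 * dotv x (z - w) <= dotv z z - dotv w w.
Proof.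
rewrite -ler_sqr ?nnegrE ?enorm_ge0 // !sqr_enorm !dotvBl !dotvBr.
by rewrite (dotvC w x) (dotvC z x); lra.
Qed.

Lemma nearest_direction_dotv_le {x w z : 'rV[R]_N} : 0 < enorm x ->
    enorm (x - w) <= enorm (x - z) ->
  dotv ((enorm x)^-1 *: x) (z - w) <= dotv z z / (2 * enorm x).
Proof.
move=> x_gt0 /nearest_dotv_le near; have := dotv_ge0 w.
rewrite dotvZl mulrC ler_pdivrMr //.
have -> : dotv z z / (2 * enorm x) * enorm x = dotv z z / 2.
  by field; rewrite gt_eqF.
lra.
Qed.

End Euclidean.

Section Topology.
Context {R : realType} {N : nat}.

Lemma continuous_dotvl (b : 'rV[R]_N) : continuous (fun y => dotv y b).
Proof.
apply: continuous_big => [|i _]; first exact: add_continuous.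
move=> y; apply: continuousM; first exact: coord_continuous.
exact: cst_continuous.
Qed.

Lemma continuous_enorm : continuous (@enorm R N).
Proof.
have dotv_cont : continuous (fun y : 'rV[R]_N => dotv y y).
  apply: continuous_big => [|i _]; first exact: add_continuous.
  by move=> y; apply: continuousM; exact: coord_continuous.
move=> y; apply: continuous_comp; first exact: dotv_cont.
exact: sqrt_continuous.
Qed.

Lemma compact_closed_unit_ball (A : set 'rV[R]_N) :
  closed A -> A `<=` [set y | enorm y <= 1] -> compact A.
Proof.
move=> A_closed A_ball; apply: (subclosed_compact A_closed).
  exact: (@rV_compact R N (fun=> `[-1, 1]%classic)
    (fun=> @segment_compact R _ _)).
move=> y /A_ball y_le1 i /=; rewrite in_itv /= -ler_norml.
exact: le_trans (coord_le_enorm y i) y_le1.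
Qed.

Lemma compact_unit_far (K : set 'rV[R]_N) (eps : R) :
  compact [set y | enorm y = 1 /\ forall u, K u -> eps <= enorm (y - u)].
Proof.
apply: compact_closed_unit_ball => [|y [y1 _]]; last by rewrite /= y1.
rewrite [X in closed X](_ : _ = enorm @^-1` [set 1] `&`
    \bigcap_(u in K) ((fun y => enorm (y - u)) @^-1` [set r | eps <= r])).
  apply: closedI.
    by apply: closed_comp => [y _|]; [exact: continuous_enorm|exact: closed_eq].
  apply: closed_bigI => u _.
  apply: closed_comp => [y _|]; last exact: closed_ge.
  apply: continuous_comp; last exact: continuous_enorm.
  by apply: (@continuousB _ _ _ id (fun=> u)) => //; exact: cst_continuous.
by apply/seteqP; split=> y [y1 y_far].
Qed.

End Topology.

Lemma compact_continuous_pos_lbound {T : topologicalType} {R : realType}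
    [S : set T] [f : T -> R] :
  compact S -> continuous f -> (forall y, S y -> 0 < f y) ->
  exists2 m, 0 < m & forall y, S y -> m <= f y.
Proof.
move=> S_compact f_cont f_pos.
have [[y0 Sy0]|S0] := pselect (S !=set0); last first.
  by exists 1 => // y Sy; case: S0; exists y.
have [c /set_mem Sc c_min] :=
  compact_EVT_min (ex_intro _ y0 Sy0) S_compact (continuous_subspaceT f_cont).
by exists (f c) => [|y Sy]; [exact: f_pos | exact/c_min/mem_set].
Qed.

Section PolarSphere.
Context {R : realType} {N M : nat}.
Variable a : 'I_M -> 'rV[R]_N.

Definition polar_sphere : set 'rV[R]_N :=
  [set u | enorm u = 1 /\ forall j, dotv u (a j) <= 0].

Definition polar_excess (y : 'rV[R]_N) : R := \sum_j Num.max (dotv y (a j)) 0.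

Lemma polar_excess_ge0 y : 0 <= polar_excess y.
Proof. by apply: sumr_ge0 => j _; rewrite le_max lexx orbT. Qed.

Lemma polar_excess_eq0 y : polar_excess y = 0 -> forall j, dotv y (a j) <= 0.
Proof.
move=> excess0 j; apply/max_idPr.
by apply: (psumr_eq0P _ excess0) => // i _; rewrite le_max lexx orbT.
Qed.

Lemma polar_excess_le {y d} : 0 <= d -> (forall j, dotv y (a j) <= d) ->
  polar_excess y <= M%:R * d.
Proof.
move=> d_ge0 y_le; apply: (@le_trans _ _ (\sum_(j < M) d)).
  by apply: ler_sum => j _; rewrite ge_max y_le.
by rewrite sumr_const card_ord mulr_natl.
Qed.

Lemma continuous_polar_excess : continuous polar_excess.
Proof.
apply: continuous_big => [|j _]; first exact: add_continuous.
move=> y.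
exact: (continuous_max (continuous_dotvl (a j) y) (@cst_continuous _ R^o 0 y)).
Qed.

Lemma near_polar_sphere {eps : R} : 0 < eps ->
  exists2 del, 0 < del & forall y, enorm y = 1 ->
    (forall j, dotv y (a j) < del) ->
    exists2 u, polar_sphere u & enorm (y - u) < eps.
Proof.
move=> eps_gt0.
(* [polar_excess] is bounded below by some [m > 0] on the compact set [far];
   [del] is chosen so that [M * del < m]. *)
pose far :=
  [set y | enorm y = 1 /\ forall u, polar_sphere u -> eps <= enorm (y - u)].
have excess_gt0 y : far y -> 0 < polar_excess y.
  move=> [y1 y_far]; rewrite lt_def polar_excess_ge0 andbT.
  apply/eqP => /polar_excess_eq0 y_polar.
  by have := y_far y (conj y1 y_polar); rewrite subrr enorm0 leNgt eps_gt0.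
have [m m_gt0 m_le] := compact_continuous_pos_lbound
  (compact_unit_far polar_sphere eps) continuous_polar_excess excess_gt0.
pose del := m / (M%:R + 1).
have del_gt0 : 0 < del by rewrite divr_gt0 // ltr_wpDl.
exists del => // y y1 y_almost.
apply: contrapT => no_u.
have y_far : far y.
  split=> // u u_polar; rewrite leNgt; apply/negP => y_near.
  by apply: no_u; exists u.
have := polar_excess_le (ltW del_gt0) (fun j => ltW (y_almost j)).
move=> /(le_trans (m_le y y_far)).
by rewrite mulrCA ler_pMr // ler_pdivlMr ?ltr_wpDl // mul1r gerDl ler10.
Qed.

End PolarSphere.

Lemma uniform_near_polar_sphere {R : realType} {N M : nat} {I : finType}
    (a : I -> 'I_M -> 'rV[R]_N) {eps : R} : 0 < eps ->
  exists2 del, 0 < del & forall i y, enorm y = 1 ->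
    (forall j, dotv y (a i j) < del) ->
    exists2 u, polar_sphere (a i) u & enorm (y - u) < eps.
Proof.
move=> eps_gt0.
have /choice[del del_spec] : forall i, exists d : R, 0 < d /\
    forall y, enorm y = 1 -> (forall j, dotv y (a i j) < d) ->
    exists2 u, polar_sphere (a i) u & enorm (y - u) < eps.
  move=> i; have [d d_gt0 d_spec] := near_polar_sphere (a i) eps_gt0.
  by exists d.
exists (\big[Num.min/1]_i del i) => [|i y y1 y_almost].
  by apply: lt_bigmin => // i _; case: (del_spec i).
apply: (del_spec i).2 => // j.
exact: lt_le_trans (y_almost j) (bigmin_le _ _ _).
Qed.

Lemma polar_sphere_sub_C1 {R : realType} {N M : nat} (vs : 'I_M -> 'rV[R]_N) w :
  polar_sphere (fun j => vs j - w) `<=` C1 (convhull vs) w.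
Proof.
move=> u [u1 u_polar]; split=> // _ [l [l_ge0 [l_sum1 ->]]].
have -> : \sum_j l j *: vs j - w = \sum_j l j *: (vs j - w).
  rewrite (eq_bigr _ (fun j _ => scalerBr _ _ _)) sumrB -scaler_suml.
  by rewrite l_sum1 scale1r.
by rewrite dotv_sumr; apply: sumr_le0 => j _; rewrite dotvZr mulr_ge0_le0.
Qed.

Theorem proposition3p1 (R : realType) (N M : nat) (vs : 'I_M -> 'rV[R]_N)
  (Hvert : forall i, is_vertex (convhull vs) (vs i))
  (v : 'rV[R]_N -> 'I_M)
  (Hv : forall x j, enorm (x - vs (v x)) <= enorm (x - vs j)) :
  forall eps : R, 0 < eps -> exists D : R, 0 < D /\
    forall x : 'rV[R]_N, D < enorm x ->
      edist ((enorm x)^-1 *: x) (C1 (convhull vs) (vs (v x))) < eps.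
Proof.
move=> eps eps_gt0.
have [del del_gt0 near_polar] :=
  uniform_near_polar_sphere (fun i j => vs j - vs i) eps_gt0.
pose B := \big[Num.max/0]_j dotv (vs j) (vs j).
exists (Num.max 1 (B / (2 * del))); split=> [|x]; first by rewrite lt_max ltr01.
rewrite gt_max => /andP[x_gt1 x_far].
have x_gt0 : 0 < enorm x := lt_trans ltr01 x_gt1.
have y1 : enorm ((enorm x)^-1 *: x) = 1 by rewrite enorm_normalize // gt_eqF.
have y_almost j : dotv ((enorm x)^-1 *: x) (vs j - vs (v x)) < del.
  apply: le_lt_trans (nearest_direction_dotv_le x_gt0 (Hv x j)) _.
  rewrite ltr_pdivrMr ?mulr_gt0 //.
  apply: le_lt_trans (le_bigmax 0 (fun j => dotv (vs j) (vs j)) j) _.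
  have -> : del * (2 * enorm x) = enorm x * (2 * del) by ring.
  by rewrite -ltr_pdivrMr ?mulr_gt0.
have [u /polar_sphere_sub_C1 u_normal y_near] := near_polar (v x) _ y1 y_almost.
exact: le_lt_trans (edist_le u_normal) y_near.
Qed.
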